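(* Let $H\in(1/2,1)$, $\alpha\in(1-H,1)$, $T>0$, $N\ge2$, $h=T/N$, $t_n=nh$. Then there is a constant $C$ (independent of $N$) such that for all $1\le k<l\le N$, all $0<u\le t_{k-1}<s\le t_k$ and all $\tau\in(t_{l-1},t_l]$, $$\int_{t_{k-1}}^{t_{l-1}}\big((t_{l-1}-v)^{\alpha-1}-(\tau-v)^{\alpha-1}\big)|v-u|^{2H-2}\,\mathrm dv\le Ch^\alpha(\tau-s)^{2H-2}.$$ *)

From HB Require Import structures.
From mathcomp Require Import all_boot all_order all_algebra.
From mathcomp Require Import all_classical all_reals all_analysis.
Set Implicit Arguments. Unset Strict Implicit. Unset Printing Implicit Defensive.
Import Order.TTheory GRing.Theory Num.Theory.
Local Open Scope ring_scope.

Definition step {R : realType} (T : R) (N : nat) : R := T / N%:R.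
Definition grid {R : realType} (T : R) (N n : nat) : R := n%:R * step T N.

From HB Require Import structures.
From mathcomp Require Import all_boot all_order all_algebra.
From mathcomp Require Import all_classical all_reals all_analysis.
From mathcomp Require Import measurable_realfun ring lra.
Set Implicit Arguments. Unset Strict Implicit. Unset Printing Implicit Defensive.
Import Order.TTheory GRing.Theory Num.Theory numFieldNormedType.Exports.
Local Open Scope classical_set_scope.
Local Open Scope ring_scope.

(* Put a = t_(k-1), b = t_(l-1) and m = (b - a) / 2 >= h / 2. Where v - a <= m we have
   b - v >= m, so by convexity the kernel difference (b - v)^(alpha-1) - (tau - v)^(alpha-1)
   is at most (1 - alpha) h m^(alpha-2), while the weight |v - u|^(2H-2) is at most
   (v - a)^(2H-2), integrable as 2H - 2 > -1. Where v - a > m the weight is at most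
   m^(2H-2), and the kernel difference integrates exactly to
   ((tau - b)^alpha - (tau - a)^alpha + (b - a)^alpha) / alpha <= h^alpha / alpha.
   Both contributions are O(h^alpha m^(2H-2)), and m >= (tau - s) / 4. *)

Section grid.
Context {R : realType}.
Variables (T : R) (N : nat).

Lemma grid_succ n : grid T N n.+1 = grid T N n + step T N.
Proof. by rewrite /grid -natr1 mulrDl mul1r. Qed.

Lemma grid_le m n : 0 <= T -> (m <= n)%N -> grid T N m <= grid T N n.
Proof. by move=> T_ge0 mn; rewrite ler_wpM2r ?ler_nat ?divr_ge0. Qed.

End grid.

Section powR_nonpositive_exponent.
Context {R : realType}.
Implicit Types (r x y d h m : R).

Lemma le0_ger_powR r x y : r <= 0 -> 0 < x -> x <= y -> y `^ r <= x `^ r.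
Proof.
move=> r_le0 x_gt0 xy.
have y_gt0 : 0 < y by exact: lt_le_trans xy.
have powRE z : z `^ r = (z `^ (- r))^-1 by rewrite powRN invrK.
rewrite (powRE x) (powRE y) lef_pV2 ?posrE ?powR_gt0 //.
by apply: (ge0_ler_powR (r := - r)); rewrite ?nnegrE ?oppr_ge0 //; apply: ltW.
Qed.

(* [(1 + t)^r = e^(r ln (1 + t)) >= 1 + r ln (1 + t) >= 1 + r t], as [r <= 0]. *)
Lemma le0_powR_sub_powRD r x d : r <= 0 -> 0 < x -> 0 <= d ->
  x `^ r - (x + d) `^ r <= - r * d * x `^ r / x.
Proof.
move=> r_le0 x_gt0 d_ge0.
have dx_ge0 : 0 <= d / x by rewrite divr_ge0 // ltW.
have -> : x + d = x * (1 + d / x) by rewrite mulrDr mulr1 mulrCA divff ?gt_eqF ?mulr1.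
rewrite powRM ?addr_ge0 //; last exact: ltW.
have tangent : 1 + r * (d / x) <= (1 + d / x) `^ r.
  rewrite /powR gt_eqF ?ltr_wpDr //.
  apply: le_trans (expR_ge1Dx _); rewrite lerD2l.
  have : ln (1 + d / x) <= d / x by apply: le_ln1Dx; lra.
  nra.
have xr_gt0 : 0 < x `^ r by rewrite powR_gt0.
have : x `^ r * (1 + r * (d / x)) <= x `^ r * (1 + d / x) `^ r by rewrite ler_pM2l.
rewrite mulrDr mulr1 => le_r.
have -> : - r * d * x `^ r / x = - (x `^ r * (r * (d / x))) by ring.
lra.
Qed.

Lemma le0_powR_sub_powRD_le r x d m h : r <= 0 -> 0 < m -> m <= x ->
  0 <= d -> d <= h -> x `^ r - (x + d) `^ r <= - r * h * m `^ r / m.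
Proof.
move=> r_le0 m_gt0 mx d_ge0 dh.
have x_gt0 : 0 < x by exact: lt_le_trans mx.
apply: le_trans (le0_powR_sub_powRD r_le0 x_gt0 d_ge0) _.
rewrite -!mulrA ler_wpM2l ?oppr_ge0 //.
apply: ler_pM => //; first by rewrite divr_ge0 ?powR_ge0 // ltW.
apply: ler_pM; rewrite ?powR_ge0 ?invr_ge0 ?le0_ger_powR //; first exact: ltW.
by rewrite lef_pV2.
Qed.

End powR_nonpositive_exponent.

Lemma is_derive1_continuous {R : realType} (f : R -> R) (x df : R) :
  is_derive x 1 f df -> {for x, continuous f}.
Proof. by move=> fx; apply/differentiable_continuous/derivable1_diffP; exact: ex_derive. Qed.

Section improper_FTC.
Context {R : realType}.
Notation mu := (@lebesgue_measure R).
Variables (f F : R -> R) (c d : R).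
Hypotheses (cd : c < d) (cf : {in `]c, d[, continuous f}).
Hypotheses (f_ge0 : {in `]c, d[, forall x, 0 <= f x}).
Hypotheses (dF : {in `]c, d[, forall x : R, is_derive x 1 F (f x)}).
Hypotheses (Fc : F x @[x --> c^'+] --> F c) (Fd : F x @[x --> d^'-] --> F d).

Let e n : R := harmonic n * ((d - c) / 3).

Let e_gt0 n : 0 < e n.
Proof. by rewrite mulr_gt0 ?harmonic_gt0 ?divr_gt0 ?subr_gt0. Qed.

Let e_le n : e n <= (d - c) / 3.
Proof.
rewrite ler_piMl //; first by rewrite divr_ge0 // subr_ge0 ltW.
by rewrite /harmonic /= invf_le1 ?ler1n ?ltr0n.
Qed.

Let e_nonincreasing m n : (m <= n)%N -> e n <= e m.
Proof.
move=> mn; rewrite ler_pM2r ?divr_gt0 ?subr_gt0 //.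
by rewrite /harmonic /= lef_pV2 ?posrE ?ltr0n // ler_nat.
Qed.

Let e_cvg0 : e n @[n --> \oo] --> 0.
Proof.
by rewrite -(mul0r ((d - c) / 3)); apply: cvgM; [exact: cvg_harmonic | exact: cvg_cst].
Qed.

Let K n : set R := `[c + e n, d - e n].

Let K_sub n : K n `<=` `]c, d[.
Proof.
move=> x; rewrite /K /= !in_itv /= => /andP[cx xd].
by have en := e_gt0 n; apply/andP; split; lra.
Qed.

Let K_nondecreasing : nondecreasing_seq K.
Proof.
move=> m n mn; rewrite subsetEset => x; rewrite /K /= !in_itv /= => /andP[].
by have emn := e_nonincreasing mn; move=> *; apply/andP; split; lra.
Qed.

Let bigcup_K : \bigcup_n K n = `]c, d[%classic.
Proof.
apply/seteqP; split=> [x [n _ /K_sub //]|x].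
rewrite /= in_itv /= => /andP[cx xd].
have m_gt0 : 0 < Num.min (x - c) (d - x) by rewrite lt_min !subr_gt0 cx xd.
have [N _ eN] := cvgr_lt _ e_cvg0 _ m_gt0.
exists N => //; have := eN N (leqnn N); rewrite lt_min => /andP[].
by rewrite /K /= in_itv /=; move=> *; apply/andP; split; lra.
Qed.

Let FTC_K n : (\int[mu]_(x in K n) (f x)%:E = (F (d - e n))%:E - (F (c + e n))%:E)%E.
Proof.
have en := e_gt0 n; have en_le := e_le n.
have inK x : c + e n < x < d - e n -> x \in `]c, d[.
  by move=> /andP[? ?]; rewrite in_itv /=; apply/andP; split; lra.
have F_cont x : c < x < d -> F @ x --> F x.
  by move=> cxd; apply: (@is_derive1_continuous _ F x (f x)); apply: dF; rewrite in_itv.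
apply: continuous_FTC2; first lra.
- apply: continuous_in_subspaceT => x /set_mem Kx; apply: cf.
  by rewrite inE; exact: K_sub Kx.
- split.
  + by move=> x; rewrite in_itv /= => /inK /dF dFx; apply: ex_derive.
  + by apply/cvg_at_right_filter/F_cont/andP; split; lra.
  + by apply/cvg_at_left_filter/F_cont/andP; split; lra.
- by move=> x; rewrite in_itv /= => /inK /dF dFx; rewrite derive1E derive_val.
Qed.

(* [f] may blow up at both ends: exhaust [`]c, d[] by the compact intervals [K n], apply
   [continuous_FTC2] on each of them, and pass to the limit by monotone convergence. *)
Lemma ge0_continuous_FTC2_oo :
  (\int[mu]_(x in `]c, d[) (f x)%:E = (F d)%:E - (F c)%:E)%E.
Proof.
have mf : measurable_fun (`]c, d[ : set R) (EFin \o f : R -> \bar R).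
  apply/measurable_EFinP; apply: open_continuous_measurable_fun; first exact: interval_open.
  by move=> x /set_mem; exact: cf.
have cvg_int := ge0_nondecreasing_set_cvg_integral (mu := mu) K_nondecreasing
  (fun=> measurable_itv _) (fun n => measurable_funS (measurable_itv _) (@K_sub n) mf)
  (fun n x Kx => f_ge0 (K_sub Kx)).
rewrite bigcup_K in cvg_int; rewrite -(cvg_lim _ cvg_int) //; apply: cvg_lim => //.
under eq_cvg do rewrite FTC_K -EFinB.
apply: cvg_EFin; first exact: nearW.
apply: cvgB.
- apply: (cvg_at_leftP F d (F d)).1 Fd (fun n => d - e n) _.
  split=> [n|]; first by have := e_gt0 n; lra.
  by rewrite -[X in _ --> X]subr0; apply: cvgB => //; exact: cvg_cst.
- apply: (cvg_at_rightP F c (F c)).1 Fc (fun n => c + e n) _.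
  split=> [n|]; first by have := e_gt0 n; lra.
  by rewrite -[X in _ --> X]addr0; apply: cvgD => //; exact: cvg_cst.
Qed.

End improper_FTC.

Section powR_of_distance.
Context {R : realType}.
Implicit Types (p c x : R).

Lemma is_derive_powR_subr p c x : c < x ->
  is_derive x 1 (fun v => (v - c) `^ p) (p * (x - c) `^ (p - 1)).
Proof.
move=> cx; have shift : is_derive x 1 (fun v => v - c) 1.
  by rewrite -[1 in X in is_derive _ _ _ X]subr0; exact: is_deriveB.
have dpow : is_derive (x - c) 1 (@powR R ^~ p) (p * (x - c) `^ (p - 1)).
  by apply: is_derive1_powR; rewrite subr_gt0.
by have := is_derive1_comp (g := fun v => v - c) dpow shift; rewrite mulr1.
Qed.

Lemma is_derive_powR_rsub p c x : x < c ->
  is_derive x 1 (fun v => (c - v) `^ p) (- (p * (c - x) `^ (p - 1))).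
Proof.
move=> xc; have reflect : is_derive x 1 (fun v => c - v) (-1).
  by rewrite -[-1]sub0r; exact: is_deriveB.
have dpow : is_derive (c - x) 1 (@powR R ^~ p) (p * (c - x) `^ (p - 1)).
  by apply: is_derive1_powR; rewrite subr_gt0.
by have := is_derive1_comp (g := fun v => c - v) dpow reflect; rewrite mulrN1.
Qed.

Lemma powR_subr_cvg0 p c : 0 < p -> (v - c) `^ p @[v --> c^'+] --> 0.
Proof.
move=> p_gt0; apply/cvg_at_rightP => w [wc w_cvg].
apply: (cvg_at_rightP _ 0 0).1 (powR_cvg0 p_gt0) (fun n => w n - c) _.
split=> [n|]; first by rewrite subr_gt0.
by rewrite -(subrr c); apply: cvgB => //; exact: cvg_cst.
Qed.

Lemma powR_rsub_cvg0 p c : 0 < p -> (c - v) `^ p @[v --> c^'-] --> 0.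
Proof.
move=> p_gt0; apply/cvg_at_leftP => w [wc w_cvg].
apply: (cvg_at_rightP _ 0 0).1 (powR_cvg0 p_gt0) (fun n => c - w n) _.
split=> [n|]; first by rewrite subr_gt0.
by rewrite -(subrr c); apply: cvgB => //; exact: cvg_cst.
Qed.

End powR_of_distance.

Section integrals_of_powR_of_distance.
Context {R : realType}.
Notation mu := (@lebesgue_measure R).

Lemma integral_powR_subr (a b g : R) : a < b -> -1 < g ->
  (\int[mu]_(v in `]a, b[) ((v - a) `^ g)%:E = ((g + 1)^-1 * (b - a) `^ (g + 1))%:E)%E.
Proof.
move=> ab g_gt; have g1_gt0 : 0 < g + 1 by lra.
pose Phi v := (g + 1)^-1 * (v - a) `^ (g + 1).
have dPhi x : a < x -> is_derive x 1 Phi ((x - a) `^ g).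
  move=> ax; have := is_deriveZ (g + 1)^-1 (is_derive_powR_subr (g + 1) ax).
  suff -> : (x - a) `^ g = (g + 1)^-1 * ((g + 1) * (x - a) `^ (g + 1 - 1)) by [].
  by rewrite mulrA mulVf ?gt_eqF // mul1r addrK.
have Phi_a : Phi a = 0 by rewrite /Phi subrr powR0 ?gt_eqF // mulr0.
rewrite -[_ * _]subr0 -Phi_a EFinB.
apply: ge0_continuous_FTC2_oo => // [x|x|x||].
- rewrite in_itv /= => /andP[ax _].
  exact: is_derive1_continuous (is_derive_powR_subr g ax).
- by move=> _; exact: powR_ge0.
- by rewrite in_itv /= => /andP[ax _]; exact: dPhi.
- rewrite Phi_a -(mulr0 (g + 1)^-1); apply: cvgM; first exact: cvg_cst.
  exact: powR_subr_cvg0.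
- exact/cvg_at_left_filter/is_derive1_continuous/dPhi.
Qed.

Lemma integral_powR_rsub_diff (a b tau p : R) : a < b -> b < tau -> 0 < p <= 1 ->
  (\int[mu]_(v in `]a, b[) ((b - v) `^ (p - 1) - (tau - v) `^ (p - 1))%:E
    = (p^-1 * ((tau - b) `^ p - (tau - a) `^ p + (b - a) `^ p))%:E)%E.
Proof.
move=> ab btau /andP[p_gt0 p_le1].
pose Phi v := p^-1 * ((tau - v) `^ p - (b - v) `^ p).
have dPhi x : x < b -> is_derive x 1 Phi ((b - x) `^ (p - 1) - (tau - x) `^ (p - 1)).
  move=> xb; have xtau : x < tau by lra.
  have := is_deriveZ p^-1 (is_deriveB (is_derive_powR_rsub p xtau) (is_derive_powR_rsub p xb)).
  suff -> : (b - x) `^ (p - 1) - (tau - x) `^ (p - 1) =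
    p^-1 * (- (p * (tau - x) `^ (p - 1)) - - (p * (b - x) `^ (p - 1))) by [].
  by field; rewrite gt_eqF.
have -> : p^-1 * ((tau - b) `^ p - (tau - a) `^ p + (b - a) `^ p) = Phi b - Phi a.
  by rewrite /Phi subrr powR0 ?gt_eqF // subr0; ring.
rewrite EFinB; apply: ge0_continuous_FTC2_oo => // [x|x|x||].
- rewrite in_itv /= => /andP[_ xb]; have xtau : x < tau by lra.
  exact: is_derive1_continuous (is_deriveB (is_derive_powR_rsub (p - 1) xb)
                                           (is_derive_powR_rsub (p - 1) xtau)).
- rewrite in_itv /= => /andP[_ xb]; rewrite subr_ge0.
  by apply: le0_ger_powR; lra.
- by rewrite in_itv /= => /andP[_ xb]; exact: dPhi.
- exact/cvg_at_right_filter/is_derive1_continuous/dPhi.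
- rewrite {2}/Phi subrr powR0 ?gt_eqF // subr0.
  apply: cvgM; first exact: cvg_cst.
  rewrite -[X in _ --> X]subr0; apply: cvgB; last exact: powR_rsub_cvg0.
  by apply: cvg_at_left_filter; exact: is_derive1_continuous (is_derive_powR_rsub p btau).
Qed.

End integrals_of_powR_of_distance.

Section kernel_estimate.
Context {R : realType}.
Notation mu := (@lebesgue_measure R).

Lemma kernel_weight_le (alpha gamma a b m h u tau v : R) :
  alpha <= 1 -> gamma <= 0 -> b - a = 2 * m ->
  u <= a -> a < v < b -> b < tau <= b + h ->
  ((b - v) `^ (alpha - 1) - (tau - v) `^ (alpha - 1)) * `|v - u| `^ gamma <=
  (1 - alpha) * h * m `^ (alpha - 1) / m * (v - a) `^ gamma
  + m `^ gamma * ((b - v) `^ (alpha - 1) - (tau - v) `^ (alpha - 1)).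
Proof.
move=> alpha_le1 gamma_le0 ba ua /andP[av vb] /andP[btau tauh].
have m_gt0 : 0 < m by lra.
set F := _ - _.
have F_ge0 : 0 <= F by rewrite subr_ge0; apply: le0_ger_powR; lra.
have weight_le : `|v - u| `^ gamma <= (v - a) `^ gamma.
  by rewrite ger0_norm; [apply: le0_ger_powR|]; lra.
have K_ge0 : 0 <= (1 - alpha) * h * m `^ (alpha - 1) / m.
  by rewrite !mulr_ge0 ?powR_ge0 ?invr_ge0 ?subr_ge0 //; lra.
have [near_a|near_b] := leP (v - a) m.
- have F_le : F <= (1 - alpha) * h * m `^ (alpha - 1) / m.
    rewrite /F -[1 - alpha]opprB (_ : tau - v = b - v + (tau - b)); last by ring.
    by apply: le0_powR_sub_powRD_le; lra.
  have : 0 <= m `^ gamma * F by rewrite mulr_ge0 ?powR_ge0.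
  by have := ler_pM F_ge0 (powR_ge0 _ _) F_le weight_le; lra.
- have : `|v - u| `^ gamma <= m `^ gamma.
    by apply: le_trans weight_le (le0_ger_powR _ _ _); rewrite // ltW.
  move=> /(ler_wpM2l F_ge0); rewrite [F * _]mulrC.
  have : 0 <= (1 - alpha) * h * m `^ (alpha - 1) / m * (v - a) `^ gamma.
    by rewrite mulr_ge0 ?powR_ge0.
  lra.
Qed.

Lemma integral_kernel_weight_le (alpha gamma a b m h u tau : R) :
  0 < alpha <= 1 -> -1 < gamma <= 0 -> a < b -> b - a = 2 * m -> u <= a ->
  b < tau <= b + h ->
  (\int[mu]_(v in `[a, b])
      (((b - v) `^ (alpha - 1) - (tau - v) `^ (alpha - 1)) * `|v - u| `^ gamma)%:E
   <= ((1 - alpha) * h * m `^ (alpha - 1) / m * ((gamma + 1)^-1 * (b - a) `^ (gamma + 1))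
       + m `^ gamma * (alpha^-1 *
           ((tau - b) `^ alpha - (tau - a) `^ alpha + (b - a) `^ alpha)))%:E)%E.
Proof.
move=> /andP[alpha_gt0 alpha_le1] /andP[gamma_gtN1 gamma_le0] ab ba ua tau_near.
have [btau tauh] := andP tau_near.
have m_gt0 : 0 < m by lra.
set K := (1 - alpha) * h * m `^ (alpha - 1) / m.
have K_ge0 : 0 <= K by rewrite !mulr_ge0 ?powR_ge0 ?invr_ge0 ?subr_ge0 //; lra.
pose F v := (b - v) `^ (alpha - 1) - (tau - v) `^ (alpha - 1).
have F_ge0 v : v < b -> 0 <= F v.
  by move=> vb; rewrite subr_ge0; apply: le0_ger_powR; lra.
have m_dist (c p : R) : measurable_fun setT (fun v : R => (c - v) `^ p).
  apply: measurableT_comp (measurable_powR p) _.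
  exact: measurable_funB (measurable_cst c) (@measurable_id _ _ setT).
have m_shift (c p : R) : measurable_fun setT (fun v : R => (v - c) `^ p).
  apply: measurableT_comp (measurable_powR p) _.
  exact: measurable_funB (@measurable_id _ _ setT) (measurable_cst c).
have mF : measurable_fun `]a, b[ (EFin \o F).
  by apply/measurable_EFinP/measurable_funTS; exact: measurable_funB.
have mA : measurable_fun `]a, b[ (fun v => ((v - a) `^ gamma)%:E).
  by apply/measurable_EFinP/measurable_funTS.
have mg : measurable_fun `]a, b[ (fun v => (F v * `|v - u| `^ gamma)%:E).
  apply/measurable_EFinP/measurable_funTS/measurable_funM; first exact: measurable_funB.
  apply: measurableT_comp (measurable_powR gamma) _.
  apply: measurableT_comp (@normr_measurable _ _) _.
  exact: measurable_funB (@measurable_id _ _ setT) (measurable_cst u).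
rewrite integral_itv_bndoo //.
apply: (@le_trans _ _ (\int[mu]_(v in `]a, b[)
    (K%:E * ((v - a) `^ gamma)%:E + (m `^ gamma)%:E * (F v)%:E))%E).
  apply: ge0_le_integral => //.
  - move=> v; rewrite /= in_itv /= => /andP[_ /F_ge0 ?].
    by rewrite lee_fin mulr_ge0 ?powR_ge0.
  - by apply: emeasurable_funD; apply: emeasurable_funM => //; exact: measurable_cst.
  - move=> v; rewrite /= in_itv /= => avb; rewrite -!EFinM -EFinD lee_fin.
    exact: kernel_weight_le.
have ge0_A v : `]a, b[%classic v -> (0 <= ((v - a) `^ gamma)%:E)%E.
  by rewrite lee_fin powR_ge0.
have ge0_F v : `]a, b[%classic v -> (0 <= (F v)%:E)%E.
  by rewrite /= in_itv /= lee_fin => /andP[_ /F_ge0].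
rewrite ge0_integralD //; first last.
- by apply: emeasurable_funM => //; exact: measurable_cst.
- by move=> v /ge0_F; apply: mule_ge0; rewrite lee_fin powR_ge0.
- by apply: emeasurable_funM => //; exact: measurable_cst.
- by move=> v /ge0_A; apply: mule_ge0; rewrite lee_fin.
rewrite ge0_integralZl_EFin // ge0_integralZl_EFin ?powR_ge0 //.
rewrite integral_powR_subr; [|lra|lra].
rewrite integral_powR_rsub_diff; [|lra|lra|by rewrite alpha_gt0].
by rewrite -!EFinM -EFinD.
Qed.

Lemma kernel_integral_le_const (alpha gamma : R) : 0 < alpha <= 1 -> -1 < gamma <= 0 ->
  exists C : R, forall a b h u s tau : R,
    0 < h -> h <= b - a -> u <= a -> a < s <= a + h -> b < tau <= b + h ->
    (\int[mu]_(v in `[a, b])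
        (((b - v) `^ (alpha - 1) - (tau - v) `^ (alpha - 1)) * `|v - u| `^ gamma)%:E
     <= (C * h `^ alpha * (tau - s) `^ gamma)%:E)%E.
Proof.
move=> alpha_bnd gamma_bnd; have [alpha_gt0 alpha_le1] := andP alpha_bnd.
have [gamma_gtN1 gamma_le0] := andP gamma_bnd.
set A := (1 - alpha) * 2 `^ (gamma + 1) / (gamma + 1).
have A_ge0 : 0 <= A by rewrite !mulr_ge0 ?powR_ge0 ?invr_ge0 ?subr_ge0 //; lra.
exists ((A * 2^-1 `^ (alpha - 1) + alpha^-1) * 4^-1 `^ gamma).
move=> a b h u s tau h_gt0 hD ua /andP[as_ sah] tau_near.
have [btau tauh] := andP tau_near.
set m := (b - a) / 2.
have m_gt0 : 0 < m by rewrite /m; lra.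
have ba : b - a = 2 * m by rewrite /m; lra.
have ab : a < b by lra.
apply: le_trans (integral_kernel_weight_le alpha_bnd gamma_bnd ab ba ua tau_near) _.
rewrite lee_fin.
have m_pow : m * m `^ gamma = m `^ (gamma + 1).
  by rewrite -(@mulr_powRB1 _ _ (gamma + 1) (ltW m_gt0)) ?addrK //; lra.
have first_term :
    (1 - alpha) * h * m `^ (alpha - 1) / m * ((gamma + 1)^-1 * (b - a) `^ (gamma + 1))
    = A * (h * m `^ (alpha - 1)) * m `^ gamma.
  rewrite ba powRM ?ler0n ?(ltW m_gt0) // -m_pow /A.
  by field; rewrite gt_eqF //; lra.
have hm_le : h * m `^ (alpha - 1) <= 2^-1 `^ (alpha - 1) * h `^ alpha.
  rewrite -(mulr_powRB1 (ltW h_gt0) alpha_gt0) mulrCA ler_wpM2l ?(ltW h_gt0) //.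
  rewrite -powRM ?invr_ge0 ?ler0n ?(ltW h_gt0) //.
  by apply: le0_ger_powR; rewrite /m; lra.
have mg_le : m `^ gamma <= 4^-1 `^ gamma * (tau - s) `^ gamma.
  rewrite -powRM ?invr_ge0 ?ler0n //; last lra.
  by apply: le0_ger_powR; rewrite /m; lra.
have X_le : (tau - b) `^ alpha - (tau - a) `^ alpha + (b - a) `^ alpha <= h `^ alpha.
  have : (tau - b) `^ alpha <= h `^ alpha by apply: ge0_ler_powR; rewrite ?nnegrE; lra.
  have : (b - a) `^ alpha <= (tau - a) `^ alpha by apply: ge0_ler_powR; rewrite ?nnegrE; lra.
  lra.
rewrite first_term.
have -> : (A * 2^-1 `^ (alpha - 1) + alpha^-1) * 4^-1 `^ gamma * h `^ alpha * (tau - s) `^ gamma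
    = (A * (2^-1 `^ (alpha - 1) * h `^ alpha) + alpha^-1 * h `^ alpha)
      * (4^-1 `^ gamma * (tau - s) `^ gamma) by ring.
apply: le_trans (ler_wpM2l _ mg_le); last first.
  by rewrite addr_ge0 ?mulr_ge0 ?powR_ge0 ?invr_ge0 //; lra.
rewrite mulrDl [m `^ gamma * _]mulrC; apply: lerD; apply: ler_wpM2r; rewrite ?powR_ge0 //.
  exact: ler_wpM2l.
by apply: ler_wpM2l; rewrite ?invr_ge0 // ltW.
Qed.

End kernel_estimate.

Theorem lemma3p4 (R : realType) (H alpha T : R) :
  1 / 2 < H < 1 -> 1 - H < alpha < 1 -> 0 < T ->
  exists C : R, forall (N k l : nat) (u s tau : R),
    (2 <= N)%N -> (1 <= k)%N -> (k < l)%N -> (l <= N)%N ->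
    0 < u -> u <= grid T N k.-1 -> grid T N k.-1 < s -> s <= grid T N k ->
    grid T N l.-1 < tau -> tau <= grid T N l ->
    (\int[@lebesgue_measure R]_(v in `[grid T N k.-1, grid T N l.-1])
        (((grid T N l.-1 - v) `^ (alpha - 1) - (tau - v) `^ (alpha - 1))
          * `|v - u| `^ (2 * H - 2))%:E
     <= (C * step T N `^ alpha * (tau - s) `^ (2 * H - 2))%:E)%E.
Proof.
move=> /andP[H_gt H_lt1] /andP[alpha_gt alpha_lt1] T_gt0.
have alpha_bnd : 0 < alpha <= 1 by apply/andP; split; lra.
have gamma_bnd : -1 < 2 * H - 2 <= 0 by apply/andP; split; lra.
have [C kernel_le] := kernel_integral_le_const alpha_bnd gamma_bnd.
exists C => N k l u s tau N2 k1 kl lN _ ua as_ sk btau taul.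
have h_gt0 : 0 < step T N by rewrite divr_gt0 // ltr0n (leq_trans _ N2).
have l_gt0 : (0 < l)%N := leq_ltn_trans (leq0n k) kl.
have kS : grid T N k = grid T N k.-1 + step T N by rewrite -grid_succ prednK.
have lS : grid T N l = grid T N l.-1 + step T N by rewrite -grid_succ prednK.
have k_le : grid T N k <= grid T N l.-1.
  by apply: grid_le; [exact: ltW | rewrite -ltnS prednK].
apply: kernel_le => //; first lra.
  by apply/andP; split; lra.
by apply/andP; split; lra.
Qed.
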